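(* Let $(X,\ast,u,d)$ be a finite block GL-rack, let $\Delta=\alpha_1\cdots\alpha_n$ be the disjoint cycle decomposition of its diagonal map (fixed points counted as cycles of length $1$), let $A_i=\operatorname{supp}(\alpha_i)$, and let $c=|A_i|$ (the common length). Then: (1) $x\ast y=x\ast y'$ for all $i,j$, all $x\in A_i$ and all $y,y'\in A_j$; (2) $x\ast y\neq x'\ast y$ for all $i,j$, all $x\neq x'\in A_i$ and all $y\in A_j$. Consequently, for all $i,j\in\{1,\dots,n\}$ there is $k\in\{1,\dots,n\}$ with $A_i\ast A_j:=\{x\ast y: x\in A_i,y\in A_j\}=A_k$, and in particular $A_i\ast A_i=A_i$ for every $i$.
   Context: A rack is a set $X$ with a binary operation $\ast$ such that for every $y\in X$ the map $x\mapsto x\ast y$ is a bijection of $X$ and $(x\ast y)\ast z=(x\ast z)\ast(y\ast z)$ for all $x,y,z$. A GL-rack is a quadruple $(X,\ast,u,d)$ where $(X,\ast)$ is a rack and $u,d\colon X\to X$ are maps such that for all $x,y\in X$: $u(d(x\ast x))=d(u(x\ast x))=x$; $u(x\ast y)=u(x)\ast y$ and $d(x\ast y)=d(x)\ast y$; $x\ast u(y)=x\ast d(y)=x\ast y$. The diagonal map is $\Delta\colon X\to X$, $\Delta(x)=x\ast x$; for a finite GL-rack it is a bijection (a rack automorphism) and $\Delta=(u\circ d)^{-1}$. A finite GL-rack is a block GL-rack if all cycles in the disjoint cycle decomposition of the permutation $\Delta$ (including cycles of length $1$) have the same length. *)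

From mathcomp Require Import all_boot.
Set Implicit Arguments. Unset Strict Implicit. Unset Printing Implicit Defensive.

Definition is_rack (X : finType) (op : X -> X -> X) : Prop :=
  (forall y : X, bijective (fun x => op x y)) /\
  (forall x y z : X, op (op x y) z = op (op x z) (op y z)).

Definition is_GLrack (X : finType) (op : X -> X -> X) (u d : X -> X) : Prop :=
  is_rack op /\
  (forall x : X, u (d (op x x)) = x /\ d (u (op x x)) = x) /\
  (forall x y : X, u (op x y) = op (u x) y /\ d (op x y) = op (d x) y) /\
  (forall x y : X, op x (u y) = op x y /\ op x (d y) = op x y).

Definition diag (X : finType) (op : X -> X -> X) : X -> X := fun x => op x x.

(* Support of the cycle of Delta through x (Delta is a permutation for a
   finite GL-rack, so these sets are exactly the supports of the cycles in the
   disjoint cycle decomposition of Delta, fixed points included). *)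
Definition cyc (X : finType) (op : X -> X -> X) (x : X) : {set X} :=
  [set y | fconnect (diag op) x y].

Definition is_block_GLrack (X : finType) (op : X -> X -> X) (u d : X -> X) : Prop :=
  is_GLrack op u d /\ (forall x y : X, #|cyc op x| = #|cyc op y|).

Definition setop (X : finType) (op : X -> X -> X) (A B : {set X}) : {set X} :=
  [set op x y | x in A, y in B].

From mathcomp Require Import all_boot.

Set Implicit Arguments.
Unset Strict Implicit.
Unset Printing Implicit Defensive.

(* Right self-distributivity gives x * (y * y) = x * y, so x * y only depends on
   the Delta-cycle of y; and Delta is a rack endomorphism with
   Delta (x * y) = Delta x * y, so the Delta-cycle of x is mapped by _ * y onto
   the Delta-cycle of x * y, injectively since right translations are bijective. *)

Section Rack.

Variables (X : finType) (op : X -> X -> X).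
Hypothesis opK : forall y : X, bijective (fun x => op x y).
Hypothesis op_distr : forall x y z : X, op (op x y) z = op (op x z) (op y z).

Lemma op_diagr x y : op x (diag op y) = op x y.
Proof. by have [g _ gK] := opK y; rewrite -(gK x) /= -op_distr. Qed.

Lemma op_iter_diagr n x y : op x (iter n (diag op) y) = op x y.
Proof. by elim: n => //= n IHn; rewrite op_diagr. Qed.

Lemma iter_diag_opl n x y : iter n (diag op) (op x y) = op (iter n (diag op) x) y.
Proof. by elim: n => //= n ->; rewrite /diag -op_distr. Qed.

Lemma op_cycr b x y : y \in cyc op b -> op x y = op x b.
Proof. by rewrite inE => /iter_findex <-; rewrite op_iter_diagr. Qed.

Lemma setop_cyc a b : setop op (cyc op a) (cyc op b) = cyc op (op a b).
Proof.
apply/setP => z; apply/imset2P/idP => [[x y xa yb ->] | ].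
  rewrite (op_cycr x yb); move: xa; rewrite !inE => /iter_findex <-.
  by rewrite -iter_diag_opl fconnect_iter.
rewrite inE => /iter_findex <-; rewrite iter_diag_opl.
by exists (iter (findex (diag op) (op a b) z) (diag op) a) b;
  rewrite // inE ?fconnect_iter ?connect0.
Qed.

End Rack.

Lemma GLrack_diag_inj (X : finType) (op : X -> X -> X) (u d : X -> X) :
  is_GLrack op u d -> injective (diag op).
Proof.
move=> [_ [udK _]] x y eq_diag.
by rewrite -[x](proj1 (udK x)) -[y](proj1 (udK y)) -!/(diag op _) eq_diag.
Qed.

Lemma cyc_diag (X : finType) (op : X -> X -> X) a :
  injective (diag op) -> cyc op (diag op a) = cyc op a.
Proof. by move=> diag_inj; apply/setP => z; rewrite !inE -same_fconnect1. Qed.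

Theorem proposition3p3 (X : finType) (op : X -> X -> X) (u d : X -> X) :
  is_block_GLrack op u d ->
  (* (1) *)
  (forall (a b x y y' : X), x \in cyc op a -> y \in cyc op b -> y' \in cyc op b ->
      op x y = op x y') /\
  (* (2) *)
  (forall (a b x x' y : X), x \in cyc op a -> x' \in cyc op a -> x != x' ->
      y \in cyc op b -> op x y != op x' y) /\
  (* consequence *)
  (forall a b : X, exists k : X, setop op (cyc op a) (cyc op b) = cyc op k) /\
  (forall a : X, setop op (cyc op a) (cyc op a) = cyc op a).
Proof.
move=> [GL _]; have [[opK op_distr] _] := GL.
split=> [a b x y y' _ yb y'b | ].
  by rewrite (op_cycr opK op_distr x yb) (op_cycr opK op_distr x y'b).
split=> [a b x x' y _ _ neq_xx' _ |].
  by apply: contra neq_xx' => /eqP/(bij_inj (opK y))->.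
split=> [a b | a]; first by exists (op a b); apply: setop_cyc.
rewrite (setop_cyc opK op_distr); exact: cyc_diag a (GLrack_diag_inj GL).
Qed.
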